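(* Let $s$ be an indeterminate, and for an integer $k$ put $\{k\}_s=s^k-s^{-k}$ and $[k]_s=\{k\}_s/\{1\}_s$. For positive integers $m,n$ let $V_H(m,n)=[mn]_s$ (the colored Jones polynomial of the Hopf link $H$, normalized so that the $k$-colored unknot has value $[k]_s$). Let $E_m,E_n,Q_m,Q_n$ act on functions $f(m,n)$ by $(E_mf)(m,n)=f(m+1,n)$, $(E_nf)(m,n)=f(m,n+1)$, $(Q_mf)(m,n)=s^mf(m,n)$, $(Q_nf)(m,n)=s^nf(m,n)$, and put $a(x)=x-x^{-1}$. Define \[A_{s;m}(H)=E_m^2-(Q_n+Q_n^{-1})E_m+1,\qquad A_{s;n}(H)=E_n^2-(Q_m+Q_m^{-1})E_n+1,\] \[A^{\mathrm{bi}}_{s;mn}(H)=a(Q_m)E_m-a(Q_n)E_n+a(Q_nQ_m^{-1}).\] Then $A_{s;m}(H)V_H=0$ and $A^{\mathrm{bi}}_{s;mn}(H)V_H=0$, and in the algebra described in the context the identity \[a(Q_m)a(sQ_m)A_{s;m}(H)-a(Q_n)a(sQ_n)A_{s;n}(H)=\{a(Q_m)E_m+a(Q_n)E_n-a(sQ_mQ_n)\}\,A^{\mathrm{bi}}_{s;mn}(H)\] holds.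
   Context: The identity is in the noncommutative algebra of polynomials in $E_m,E_n$ with coefficients in $\mathbb{Q}(s,Q_m,Q_n)$ written on the left, subject to $E_mE_n=E_nE_m$, $E_m\,p(s,Q_m,Q_n)=p(s,sQ_m,Q_n)\,E_m$ and $E_n\,p(s,Q_m,Q_n)=p(s,Q_m,sQ_n)\,E_n$ for rational functions $p$ (this is the composition rule of the operators above). *)

From mathcomp Require Import all_boot all_order all_algebra.
Set Implicit Arguments. Unset Strict Implicit. Unset Printing Implicit Defensive.
Import GRing.Theory.
Local Open Scope ring_scope.
From mathcomp Require Import generic_quotient.

Notation "x %:F" := (@FracField.tofrac _ x) (format "x %:F") : ring_scope.

Definition Qs := {fraction {poly rat}}.
Definition sv : Qs := ('X : {poly rat})%:F.
Definition qbrace (k : nat) : Qs := sv ^+ k - sv ^- k.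
Definition qint (k : nat) : Qs := qbrace k / qbrace 1.
Definition VH (m n : nat) : Qs := qint (m * n).
Definition afun {F : fieldType} (x : F) : F := x - x^-1.

(* Coefficient field K = Q(s, Q_m, Q_n), realised as the fraction field of
   rat[s][Q_m][Q_n]: innermost variable s, then Q_m, outermost Q_n. *)
Definition P3 := {poly {poly {poly rat}}}.
Definition K := {fraction P3}.
Definition sP : P3 := (('X : {poly rat})%:P)%:P.
Definition QmP : P3 := ('X : {poly {poly rat}})%:P.
Definition QnP : P3 := 'X.
Definition sK : K := sP%:F.
Definition QmK : K := QmP%:F.
Definition QnK : K := QnP%:F.

(* substitution Q_m |-> s Q_m on polynomials *)
Definition shiftm_P (p : P3) : P3 :=
  map_poly (fun q : {poly {poly rat}} => q \Po ((('X : {poly rat})%:P) * 'X)) p.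
(* substitution Q_n |-> s Q_n on polynomials *)
Definition shiftn_P (p : P3) : P3 :=
  p \Po (((('X : {poly rat})%:P)%:P) * 'X).

Definition frac_map (f : P3 -> P3) (x : K) : K :=
  (f (\n_(repr x)))%:F / (f (\d_(repr x)))%:F.

Definition shiftm (x : K) : K := frac_map shiftm_P x.
Definition shiftn (x : K) : K := frac_map shiftn_P x.

(* Elements of the algebra: sum_{i,j} c_ij E_m^i E_n^j (coefficients on the
   left), encoded as bivariate polynomials: outer variable E_m, inner E_n;
   c_ij = (A`_i)`_j. *)
Definition OA := {poly {poly K}}.
Definition Em : OA := 'X.
Definition En : OA := ('X : {poly K})%:P.
Definition scal (c : K) : OA := (c%:P)%:P.

(* twisted product:
   (c E_m^i E_n^j)(d E_m^k E_n^l) = c sigma_m^i sigma_n^j (d) E_m^(i+k) E_n^(j+l) *)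
Definition omul (A B : OA) : OA :=
  \sum_(i < size A) \sum_(j < size A`_i) \sum_(k < size B) \sum_(l < size B`_k)
    (((A`_i`_j * iter i shiftm (iter j shiftn (B`_k`_l)))%:P
        * 'X^(j + l))%:P * 'X^(i + k)).

Definition aK (x : K) : K := x - x^-1.

Definition A_m : OA := omul Em Em - omul (scal (QnK + QnK^-1)) Em + 1.
Definition A_n : OA := omul En En - omul (scal (QmK + QmK^-1)) En + 1.
Definition A_bi : OA :=
  omul (scal (aK QmK)) Em - omul (scal (aK QnK)) En + scal (aK (QnK * QmK^-1)).

From HB Require Import structures.
From mathcomp Require Import all_boot all_order all_algebra generic_quotient.
From mathcomp Require Import ring zify.
Import GRing.Theory.
Local Open Scope ring_scope.

(* Write a(t) = t - t^-1, so that {k}_s = a(s^k).  The two difference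
   equations for V_H(m, n) = {mn}_s / {1}_s are then the three-term identities
   a(v^2 w) - (v + v^-1) a(v w) + a(w) = 0 and
   a(u) a(v w) - a(v) a(u w) + a(v/u) a(w) = 0 at u = s^m, v = s^n, w = s^mn.
   For the operator identity, the substitutions Q_m |-> s Q_m and Q_n |-> s Q_n
   are injective ring endomorphisms of the polynomial ring, hence extend to
   automorphisms sigma_m, sigma_n of its fraction field.  The product of the
   algebra is bilinear and multiplies monomials by
   c E_m^i E_n^j * d E_m^k E_n^l = c sigma_m^i sigma_n^j (d) E_m^(i+k) E_n^(j+l);
   expanding both sides into monomials of total degree at most 2 and comparing
   coefficients leaves three identities between products of values of a. *)

Section AfunIdentities.
Context {F : fieldType}.

Lemma afun_recurrence (v w : F) : v != 0 -> w != 0 ->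
  afun (v * (v * w)) - (v + v^-1) * afun (v * w) + afun w = 0.
Proof. by move=> v0 w0; rewrite /afun; field; rewrite v0 w0. Qed.

Lemma afun_three_term (u v w : F) : u != 0 -> v != 0 -> w != 0 ->
  afun u * afun (v * w) - afun v * afun (u * w) + afun (v / u) * afun w = 0.
Proof. by move=> u0 v0 w0; rewrite /afun; field; rewrite u0 v0 w0. Qed.

Lemma hopf_coef_const {s x y : F} : s != 0 -> x != 0 -> y != 0 ->
  afun x * afun (s * x) - afun y * afun (s * y) = - (afun (s * x * y) * afun (y / x)).
Proof. by move=> s0 x0 y0; rewrite /afun; field; rewrite s0 x0 y0. Qed.

Lemma hopf_coef_Em {s x y : F} : s != 0 -> x != 0 -> y != 0 ->
  - (afun x * afun (s * x) * (y + y^-1)) =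
  afun x * afun (y / (s * x)) - afun (s * x * y) * afun x.
Proof. by move=> s0 x0 y0; rewrite /afun; field; rewrite s0 x0 y0. Qed.

Lemma hopf_coef_En {s x y : F} : s != 0 -> x != 0 -> y != 0 ->
  afun y * afun (s * y) * (x + x^-1) =
  afun y * afun (s * y / x) + afun (s * x * y) * afun y.
Proof. by move=> s0 x0 y0; rewrite /afun; field; rewrite s0 x0 y0. Qed.

End AfunIdentities.

Lemma big_ord_widen_eq0 {V : nmodType} {m n} {F : 'I_m -> V} {G : 'I_n -> V}
    (le_mn : (m <= n)%N) :
  (forall i, F i = G (widen_ord le_mn i)) ->
  (forall i : 'I_n, (m <= i)%N -> G i = 0) -> \sum_i F i = \sum_i G i.
Proof.
move=> FG G0; rewrite [RHS](bigID (fun i : 'I_n => (i < m)%N)) /=.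
rewrite [X in _ + X]big1 ?addr0 => [|i]; last by rewrite -leqNgt => /G0.
by rewrite (big_ord_narrow le_mn); apply: eq_bigr => i _.
Qed.

Lemma sum_ord_single {V : nmodType} {N i} {F : 'I_N -> V} (iN : (i < N)%N) :
  (forall p : 'I_N, (p : nat) != i -> F p = 0) -> \sum_p F p = F (Ordinal iN).
Proof. by move=> F0; rewrite (bigD1 (Ordinal iN)) //= big1 ?addr0. Qed.

Lemma iter_zmod_morphism (V : zmodType) (f : {additive V -> V}) n :
  zmod_morphism (iter n f).
Proof. by elim: n => // n IHn x y; rewrite /= IHn raddfB. Qed.

Lemma fracE {R : idomainType} (x : {fraction R}) :
  x = (\n_(repr x))%:F / (\d_(repr x))%:F.
Proof.
have d0 := denom_ratioP (repr x).
apply: (mulIf (_ : (\d_(repr x))%:F != 0)); first by rewrite tofrac_eq0.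
rewrite divfK ?tofrac_eq0 // -{1}[x]reprK.
unlock tofrac.
rewrite -[LHS]/(FracField.mul _ _) -FracField.pi_mul; apply/eqmodP => /=.
rewrite FracField.equivfE /FracField.mulf /= !numden_Ratio ?mulr1 ?mul1r
  ?oner_neq0 ?mulf_neq0 //.
by rewrite mulrC.
Qed.

Lemma frac_decomp {R : idomainType} (x : {fraction R}) :
  exists2 pq : R * R, pq.2 != 0 & x = pq.1%:F / pq.2%:F.
Proof. by exists (\n_(repr x), \d_(repr x)); [exact: denom_ratioP | exact: fracE]. Qed.

Section FracExtension.
Variables (R : idomainType) (f : {rmorphism R -> R}).
Hypothesis f_inj : injective f.

Definition frac_ext (x : {fraction R}) : {fraction R} :=
  (f \n_(repr x))%:F / (f \d_(repr x))%:F.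

Let f_neq0 p : p != 0 -> f p != 0.
Proof. by move=> p0; rewrite raddf_eq0. Qed.

Lemma frac_ext_frac p q : q != 0 -> frac_ext (p%:F / q%:F) = (f p)%:F / (f q)%:F.
Proof.
move=> q0; rewrite /frac_ext; set x := p%:F / q%:F.
have d0 := denom_ratioP (repr x).
apply/eqP; rewrite eqr_div ?tofrac_eq0 ?f_neq0 // -!tofracM -!rmorphM.
rewrite tofrac_eq (inj_eq f_inj) -tofrac_eq !tofracM.
by rewrite -eqr_div ?tofrac_eq0 // -fracE.
Qed.

Lemma frac_ext_tofrac p : frac_ext p%:F = (f p)%:F.
Proof. by have := @frac_ext_frac p 1 (oner_neq0 R); rewrite rmorph1 !tofrac1 !divr1. Qed.

Lemma frac_extB (x y : {fraction R}) : frac_ext (x - y) = frac_ext x - frac_ext y.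
Proof.
have [[a b] /= b0 ->] := frac_decomp x; have [[c d] /= d0 ->] := frac_decomp y.
rewrite !frac_ext_frac // -!mulNr -!tofracN !addf_div ?tofrac_eq0 ?f_neq0 //.
by rewrite -!tofracM -!tofracD frac_ext_frac ?mulf_neq0 // rmorphD !rmorphM rmorphN.
Qed.

Lemma frac_extM (x y : {fraction R}) : frac_ext (x * y) = frac_ext x * frac_ext y.
Proof.
have [[a b] /= b0 ->] := frac_decomp x; have [[c d] /= d0 ->] := frac_decomp y.
rewrite !frac_ext_frac // !mulf_div -!tofracM.
by rewrite frac_ext_frac ?mulf_neq0 // !rmorphM.
Qed.

Lemma frac_ext1 : frac_ext 1 = 1.
Proof. by rewrite -tofrac1 frac_ext_tofrac rmorph1. Qed.

End FracExtension.

Lemma comp_poly2_inj (R : idomainType) (q : {poly R}) :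
  size q = 2 -> injective (comp_poly q).
Proof. by move=> q2; apply: raddf_inj => p /eqP; rewrite comp_poly2_eq0 // => /eqP. Qed.

Lemma sv_neq0 : sv != 0.
Proof. by rewrite tofrac_eq0 polyX_eq0. Qed.

Lemma VH_recurrence_m m n :
  VH m.+2 n - (sv ^+ n + sv ^- n) * VH m.+1 n + VH m n = 0.
Proof.
rewrite /VH /qint mulrA -mulrBl -mulrDl.
suff -> : qbrace (m.+2 * n) - (sv ^+ n + sv ^- n) * qbrace (m.+1 * n)
          + qbrace (m * n) = 0 by rewrite mul0r.
rewrite /qbrace !mulSn !exprD.
by apply: afun_recurrence; rewrite expf_neq0 ?sv_neq0.
Qed.

Lemma VH_recurrence_mn m n :
  afun (sv ^+ m) * VH m.+1 n - afun (sv ^+ n) * VH m n.+1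
    + afun (sv ^+ n * (sv ^+ m)^-1) * VH m n = 0.
Proof.
rewrite /VH /qint !mulrA -mulrBl -mulrDl.
suff -> : afun (sv ^+ m) * qbrace (m.+1 * n) - afun (sv ^+ n) * qbrace (m * n.+1)
          + afun (sv ^+ n / sv ^+ m) * qbrace (m * n) = 0 by rewrite mul0r.
rewrite /qbrace mulSn mulnS !exprD.
by apply: afun_three_term; rewrite expf_neq0 ?sv_neq0.
Qed.

HB.instance Definition _ := GRing.RMorphism.copy shiftm_P
  (map_poly (comp_poly (('X : {poly rat})%:P * 'X))).
HB.instance Definition _ := GRing.RMorphism.copy shiftn_P (comp_poly (sP * 'X)).

Lemma shiftm_P_inj : injective shiftm_P.
Proof.
apply: map_inj_poly; last exact: rmorph0.
by apply: comp_poly2_inj; rewrite mul_polyC size_scale ?size_polyX ?polyX_eq0.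
Qed.

Lemma shiftn_P_inj : injective shiftn_P.
Proof.
apply: comp_poly2_inj.
by rewrite mul_polyC size_scale ?size_polyX // /sP !polyC_eq0 polyX_eq0.
Qed.

HB.instance Definition _ := GRing.isZmodMorphism.Build K K shiftm
  (@frac_extB _ _ shiftm_P_inj).
HB.instance Definition _ := GRing.isMonoidMorphism.Build K K shiftm
  (@frac_ext1 _ _ shiftm_P_inj, @frac_extM _ _ shiftm_P_inj).
HB.instance Definition _ := GRing.isZmodMorphism.Build K K shiftn
  (@frac_extB _ _ shiftn_P_inj).
HB.instance Definition _ := GRing.isMonoidMorphism.Build K K shiftn
  (@frac_ext1 _ _ shiftn_P_inj, @frac_extM _ _ shiftn_P_inj).

Lemma shiftm_tofrac p : shiftm p%:F = (shiftm_P p)%:F.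
Proof. exact: (@frac_ext_tofrac _ _ shiftm_P_inj). Qed.

Lemma shiftn_tofrac p : shiftn p%:F = (shiftn_P p)%:F.
Proof. exact: (@frac_ext_tofrac _ _ shiftn_P_inj). Qed.

Lemma shiftm_Qm : shiftm QmK = sK * QmK.
Proof. by rewrite shiftm_tofrac /shiftm_P /QmP map_polyC /= comp_polyX polyCM tofracM. Qed.

Lemma shiftm_Qn : shiftm QnK = QnK.
Proof. by rewrite shiftm_tofrac /shiftm_P /QnP map_polyX. Qed.

Lemma shiftn_Qm : shiftn QmK = QmK.
Proof. by rewrite shiftn_tofrac /shiftn_P /QmP comp_polyC. Qed.

Lemma shiftn_Qn : shiftn QnK = sK * QnK.
Proof. by rewrite shiftn_tofrac /shiftn_P /QnP comp_polyX tofracM. Qed.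

(* Restatements of rmorphM, fmorphV and rmorphB keeping [shiftm], [shiftn] as
   head symbols, so that shiftm_Qm, ... still match after rewriting with them. *)
Lemma shiftmM x y : shiftm (x * y) = shiftm x * shiftm y.
Proof. exact: rmorphM. Qed.

Lemma shiftnM x y : shiftn (x * y) = shiftn x * shiftn y.
Proof. exact: rmorphM. Qed.

Lemma shiftmV x : shiftm x^-1 = (shiftm x)^-1.
Proof. exact: fmorphV. Qed.

Lemma shiftnV x : shiftn x^-1 = (shiftn x)^-1.
Proof. exact: fmorphV. Qed.

Lemma shiftm_aK x : shiftm (aK x) = aK (shiftm x).
Proof. by rewrite /aK rmorphB fmorphV. Qed.

Lemma shiftn_aK x : shiftn (aK x) = aK (shiftn x).
Proof. by rewrite /aK rmorphB fmorphV. Qed.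

Lemma QmK_neq0 : QmK != 0.
Proof. by rewrite tofrac_eq0 polyC_eq0 polyX_eq0. Qed.

Lemma QnK_neq0 : QnK != 0.
Proof. by rewrite tofrac_eq0 polyX_eq0. Qed.

Lemma sK_neq0 : sK != 0.
Proof. by rewrite tofrac_eq0 !polyC_eq0 polyX_eq0. Qed.

Definition twist i j (x : K) : K := iter i shiftm (iter j shiftn x).

Lemma twist_is_zmod_morphism i j : zmod_morphism (twist i j).
Proof. by move=> x y; rewrite /twist !iter_zmod_morphism. Qed.

HB.instance Definition _ i j := GRing.isZmodMorphism.Build K K (twist i j)
  (twist_is_zmod_morphism i j).

(* Locked: unfolding a monomial during unification triggers polynomial and
   fraction arithmetic on concrete terms, which is prohibitively expensive. *)
Fact mon_key : unit. Proof. by []. Qed.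
Definition mon : K -> nat -> nat -> OA :=
  locked_with mon_key (fun c i j => (c%:P * 'X^j)%:P * 'X^i).

Lemma monE c i j : mon c i j = (c%:P * 'X^j)%:P * 'X^i.
Proof. by rewrite /mon unlock. Qed.

Lemma mon0 i j : mon 0 i j = 0.
Proof. by rewrite monE !(polyC0, mul0r). Qed.

Lemma coef_mon_row c i j p : (mon c i j)`_p = if p == i then c%:P * 'X^j else 0.
Proof. by rewrite monE coefCM coefXn mulr_natr; case: eqP. Qed.

Lemma coef_mon c i j p q :
  (mon c i j)`_p`_q = if (p == i) && (q == j) then c else 0.
Proof.
rewrite coef_mon_row; case: eqP => _ /=; last by rewrite coef0.
by rewrite coefCM coefXn mulr_natr; case: eqP.
Qed.

Lemma Em_mon : Em = mon 1 1 0.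
Proof. by rewrite monE expr0 mulr1 !polyC1 mul1r. Qed.

Lemma En_mon : En = mon 1 0 1.
Proof. by rewrite monE expr1 expr0 mulr1 polyC1 mul1r. Qed.

Lemma scal_mon c : scal c = mon c 0 0.
Proof. by rewrite monE !expr0 !mulr1. Qed.

Lemma one_mon : 1 = mon 1 0 0.
Proof. by rewrite -scal_mon /scal !polyC1. Qed.

(* The index ranges of [omul] depend on its arguments; truncating all of them
   at a common bound [N] makes bilinearity visible. *)
Definition omul_upto N (A B : OA) : OA :=
  \sum_(i < N) \sum_(j < N) \sum_(k < N) \sum_(l < N)
    mon (A`_i`_j * twist i j B`_k`_l) (i + k) (j + l).

Definition bounded N (A : OA) := leq (size A) N /\ forall i, leq (size A`_i) N.

Lemma bounded_widen M N A : (M <= N)%N -> bounded M A -> bounded N A.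
Proof.
by move=> MN [sA hA]; split=> [|i]; [exact: leq_trans MN | exact: leq_trans (hA i) MN].
Qed.

Lemma boundedB N A B : bounded N A -> bounded N B -> bounded N (A - B).
Proof.
move=> [sA hA] [sB hB]; split=> [|i].
  by rewrite (leq_trans (size_polyD _ _)) // size_polyN geq_max sA sB.
by rewrite coefB (leq_trans (size_polyD _ _)) // size_polyN geq_max hA hB.
Qed.

Lemma bounded_size (A : OA) : bounded (\max_(i < size A) size (A`_i)%R + size A) A.
Proof.
split=> [|i]; first exact: leq_addl.
have [iA|/(nth_default 0)->] := ltnP i (size A); last by rewrite size_poly0.
apply: leq_trans (leq_addr (size A) _).
exact: (@leq_bigmax _ (fun k : 'I_(size A) => size A`_k) (Ordinal iA)).
Qed.

Lemma bounded_common A B C : exists N, [/\ bounded N A, bounded N B & bounded N C].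
Proof.
pose b (X : OA) := (\max_(i < size X) size (X`_i)%R + size X)%N.
by exists (b A + b B + b C); split; apply: bounded_widen (bounded_size _); rewrite /b; lia.
Qed.

Lemma bounded_mon c i j : bounded (maxn i j).+1 (mon c i j).
Proof.
split=> [|p].
  by rewrite monE mul_polyC (leq_trans (size_scale_leq _ _)) // size_polyXn ltnS leq_maxl.
rewrite coef_mon_row; case: (p == i); last by rewrite size_poly0.
by rewrite mul_polyC (leq_trans (size_scale_leq _ _)) // size_polyXn ltnS leq_maxr.
Qed.

Lemma omul_uptoE N {A B} : bounded N A -> bounded N B -> omul A B = omul_upto N A B.
Proof.
move=> [sA hA] [sB hB]; rewrite /omul /omul_upto.
apply: (big_ord_widen_eq0 sA) => [i|i /(nth_default 0) Ai0].
  apply: (big_ord_widen_eq0 (hA i)) => [j|j /(nth_default 0) Aij0].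
    apply: (big_ord_widen_eq0 sB) => [k|k /(nth_default 0) Bk0].
      apply: (big_ord_widen_eq0 (hB k)) => [l|l /(nth_default 0) ->].
        by rewrite monE.
      by rewrite raddf0 mulr0 mon0.
    by apply: big1 => l _; rewrite Bk0 coef0 raddf0 mulr0 mon0.
  by do 2!apply: big1 => ? _; rewrite Aij0 mul0r mon0.
by do 3!apply: big1 => ? _; rewrite Ai0 coef0 mul0r mon0.
Qed.

Lemma omul_uptoBl N A B C :
  omul_upto N (A - B) C = omul_upto N A C - omul_upto N B C.
Proof.
rewrite /omul_upto -sumrB; apply: eq_bigr => i _; rewrite -sumrB.
apply: eq_bigr => j _; rewrite -sumrB; apply: eq_bigr => k _; rewrite -sumrB.
by apply: eq_bigr => l _; rewrite !coefB mulrBl !monE !(polyCB, mulrBl).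
Qed.

Lemma omul_uptoBr N A B C :
  omul_upto N A (B - C) = omul_upto N A B - omul_upto N A C.
Proof.
rewrite /omul_upto -sumrB; apply: eq_bigr => i _; rewrite -sumrB.
apply: eq_bigr => j _; rewrite -sumrB; apply: eq_bigr => k _; rewrite -sumrB.
by apply: eq_bigr => l _; rewrite !coefB raddfB mulrBr !monE !(polyCB, mulrBl).
Qed.

Lemma omulBl A B C : omul (A - B) C = omul A C - omul B C.
Proof.
have [N [hA hB hC]] := bounded_common A B C.
by rewrite !(omul_uptoE N) ?omul_uptoBl //; exact: boundedB.
Qed.

Lemma omulBr A B C : omul A (B - C) = omul A B - omul A C.
Proof.
have [N [hA hB hC]] := bounded_common A B C.
by rewrite !(omul_uptoE N) ?omul_uptoBr //; exact: boundedB.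
Qed.

Lemma omul0l A : omul 0 A = 0.
Proof. by rewrite -[X in omul X](subrr A) omulBl subrr. Qed.

Lemma omul0r A : omul A 0 = 0.
Proof. by rewrite -[X in omul _ X](subrr A) omulBr subrr. Qed.

Lemma omulNl A B : omul (- A) B = - omul A B.
Proof. by rewrite -sub0r omulBl omul0l sub0r. Qed.

Lemma omulNr A B : omul A (- B) = - omul A B.
Proof. by rewrite -sub0r omulBr omul0r sub0r. Qed.

Lemma omulDl A B C : omul (A + B) C = omul A C + omul B C.
Proof. by rewrite -{1}[B]opprK omulBl omulNl opprK. Qed.

Lemma omulDr A B C : omul A (B + C) = omul A B + omul A C.
Proof. by rewrite -{1}[C]opprK omulBr omulNr opprK. Qed.

Lemma omul_term_eq0 (A B : OA) i j k l : A`_i`_j = 0 \/ B`_k`_l = 0 ->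
  mon (A`_i`_j * twist i j B`_k`_l) (i + k) (j + l) = 0.
Proof. by case=> ->; rewrite ?raddf0 ?mulr0 ?mul0r mon0. Qed.

Lemma omul_mon c d i j k l :
  omul (mon c i j) (mon d k l) = mon (c * twist i j d) (i + k) (j + l).
Proof.
have [N [iN jN kN lN]] : exists N, [/\ (i < N)%N, (j < N)%N, (k < N)%N & (l < N)%N].
  by exists (maxn i j + maxn k l).+1; split; lia.
have bN e p q : (p < N)%N -> (q < N)%N -> bounded N (mon e p q).
  by move=> *; apply: bounded_widen (bounded_mon _ _ _); lia.
rewrite (omul_uptoE N (bN _ _ _ iN jN) (bN _ _ _ kN lN)) /omul_upto.
rewrite (sum_ord_single iN) => [|p /negbTE pi]; last first.
  by do 3!apply: big1 => ? _; apply: omul_term_eq0; left; rewrite coef_mon pi.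
rewrite (sum_ord_single jN) => [|q /negbTE qj]; last first.
  by do 2!apply: big1 => ? _; apply: omul_term_eq0; left; rewrite coef_mon qj andbF.
rewrite (sum_ord_single kN) => [|r /negbTE rk]; last first.
  by apply: big1 => ? _; apply: omul_term_eq0; right; rewrite coef_mon rk.
rewrite (sum_ord_single lN) => [|t /negbTE tl]; last first.
  by apply: omul_term_eq0; right; rewrite coef_mon tl andbF.
by rewrite /= !coef_mon !eqxx.
Qed.

Lemma hopf_identity :
  omul (scal (aK QmK * aK (sK * QmK))) A_m - omul (scal (aK QnK * aK (sK * QnK))) A_n
  = omul (omul (scal (aK QmK)) Em + omul (scal (aK QnK)) En - scal (aK (sK * QmK * QnK)))
         A_bi.
Proof.
rewrite /A_m /A_n /A_bi one_mon Em_mon En_mon !scal_mon.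
rewrite !(omulDl, omulDr, omulNl, omulNr, omul_mon) /twist /=.
rewrite !(rmorph1, shiftmM, shiftnM, shiftmV, shiftnV, shiftm_aK, shiftn_aK).
rewrite !(shiftm_Qm, shiftm_Qn, shiftn_Qm, shiftn_Qn).
have := QmK_neq0; have := QnK_neq0; have := sK_neq0.
move: sK QmK QnK => s x y s0 y0 x0.
apply/polyP => p; apply/polyP => q; rewrite !(coefD, coefN) !coef_mon.
case: p => [|[|[|p]]]; case: q => [|[|[|q]]] => /=;
  rewrite ?(subr0, sub0r, add0r, addr0, mulr1, mul1r, opprK, oppr0, subrr) //.
- exact: (hopf_coef_const s0 x0 y0).
- exact: (hopf_coef_En s0 x0 y0).
- exact: (hopf_coef_Em s0 x0 y0).
- by rewrite mulrC addNr.
Qed.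

Theorem mainTheorem1 :
  (* A_{s;m}(H) V_H = 0, written out at every (m,n) with m,n positive *)
  (forall m n : nat, (0 < m)%N -> (0 < n)%N ->
     VH m.+2 n - (sv ^+ n + sv ^- n) * VH m.+1 n + VH m n = 0) /\
  (* A^bi_{s;mn}(H) V_H = 0, written out *)
  (forall m n : nat, (0 < m)%N -> (0 < n)%N ->
     afun (sv ^+ m) * VH m.+1 n - afun (sv ^+ n) * VH m n.+1
       + afun (sv ^+ n * (sv ^+ m)^-1) * VH m n = 0) /\
  (* the identity in the algebra *)
  omul (scal (aK QmK * aK (sK * QmK))) A_m
    - omul (scal (aK QnK * aK (sK * QnK))) A_n
  = omul (omul (scal (aK QmK)) Em + omul (scal (aK QnK)) En
            - scal (aK (sK * QmK * QnK)))
         A_bi.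
Proof.
split; first by move=> m n _ _; exact: VH_recurrence_m.
split; first by move=> m n _ _; exact: VH_recurrence_mn.
exact: hopf_identity.
Qed.
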